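(* Let $K\ge 2$ and $p\in(0,1)$. For every $f\in\mathcal M_p$ with $\sigma_f$ equal to the identity, $$\sum_{r=1}^{K-1}D(f,r)\;\le\;C(K,p):=\sum_{r=1}^{K-2}\frac{(1-p)p^{K-r}}{(K-r)p^{K-r+1}-(K-r+1)p^{K-r}+1}+\frac{1+p}{1-p},$$ with equality when $f=f^{\mathrm{OA}}_{\mathrm{id}}$. Consequently $\min_{f}I^{\mathrm N}(f)=I^{\mathrm N}(f^{\mathrm{OA}}_{\mathrm{id}})=\log(1/p)/C(K,p)$ (minimum over $f\in\mathcal M_p$ with identity ranking), and moreover $$\frac{\log(1/p)}{C(K,p)}=(1-p)\log\!\Big(\frac1p\Big)\Big(1+\sum_{j=2}^{K}\frac{p^{j-1}}{1+2p+\cdots+(j-1)p^{j-2}}\Big)^{-1}.$$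
   Context: Items are $[K]=\{1,\dots,K\}$, $\mathcal S=\{S\subseteq[K]:|S|\ge2\}$, and $[n]=\{1,\dots,n\}$. A preference $f$ is a family of numbers $f(i\mid S)$, $S\in\mathcal S$, $i\in[K]$. For $p\in(0,1)$, the $p$-Separable family $\mathcal M_p$ consists of all $f$ such that (i) $f(i\mid S)>0$ iff $i\in S$; (ii) $\sum_{i\in S}f(i\mid S)=1$; (iii) there is a bijection $\sigma_f:[K]\to[K]$ (the ranking) such that for all $S\in\mathcal S$ and $i,i'\in S$ with $\sigma_f(i')<\sigma_f(i)$, $f(i\mid S)\le p\,f(i'\mid S)$. When $\sigma_f$ is the identity this says $f(i\mid S)\le p f(i'\mid S)$ whenever $i'<i$ in $S$. Hardness quantity (for $\sigma_f$ the identity): for $r\in[K-1]$, $i\in[r-1]$ let $\Delta^i_{K-r+1}=f(K-r+1\mid[K-i+1])-f(K-r+2\mid[K-i+1])$; $D(f,1)=\frac{1}{1-Kf(K\mid[K])}$ and for $r\in\{2,\dots,K-1\}$, $D(f,r)=\frac{(K-r+1)\sum_{i=1}^{r-1}\Delta^i_{K-r+1}D(f,i)}{1-(K-r+1)f(K-r+1\mid[K-r+1])}$; $I^{\mathrm N}(f)=\log(1/p)\big[\sum_{r=1}^{K-1}D(f,r)\big]^{-1}$. Ordinal Attraction (OA) preference: for a bijection $\sigma:[K]\to[K]$ and $S\in\mathcal S$, $i\in S$, let $\sigma(i\mid S)=1+|\{j\in S:\sigma(j)<\sigma(i)\}|$ be the local rank of $i$ in $S$, and $f^{\mathrm{OA}}_\sigma(i\mid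 S)=\frac{1-p}{1-p^{|S|}}p^{\sigma(i\mid S)-1}$ for $i\in S$ (and $0$ for $i\notin S$). $f^{\mathrm{OA}}_{\mathrm{id}}$ denotes the OA preference for the identity ranking. *)

From HB Require Import structures.
From mathcomp Require Import all_boot all_order fingroup perm.
From mathcomp Require Import all_algebra.
From mathcomp Require Import reals exp.
Set Implicit Arguments. Unset Strict Implicit. Unset Printing Implicit Defensive.
Import Order.TTheory GRing.Theory Num.Theory.
Local Open Scope ring_scope.

(* Items [K] = {1,...,K} are represented by 'I_K (item i <-> ordinal i-1).
   A preference is a total function f : {set 'I_K} -> 'I_K -> R; only its
   values on sets S with #|S| >= 2 matter (the family f(i|S), S in cal S). *)
Definition pref (R : realType) (K : nat) := {set 'I_K} -> 'I_K -> R.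

Definition pSeparable_with (R : realType) (K : nat) (p : R)
    (f : pref R K) (sigma : {perm 'I_K}) : Prop :=
  [/\ (forall S : {set 'I_K}, (2 <= #|S|)%N -> forall i, (0 < f S i) <-> (i \in S)),
      (forall S : {set 'I_K}, (2 <= #|S|)%N -> \sum_(i in S) f S i = 1) &
      (forall S : {set 'I_K}, (2 <= #|S|)%N -> forall i i' : 'I_K,
          i \in S -> i' \in S -> (sigma i' < sigma i)%N -> f S i <= p * f S i')].

Definition in_Mp (R : realType) (K : nat) (p : R) (f : pref R K) : Prop :=
  exists sigma : {perm 'I_K}, pSeparable_with p f sigma.

Definition in_Mp_id (R : realType) (K : nat) (p : R) (f : pref R K) : Prop :=
  pSeparable_with p f 1%g.

Definition prefix_set (K m : nat) : {set 'I_K} := [set j : 'I_K | (j < m)%N].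

(* F f m i = f(i | [m]) with 1-based item index i (0 if i is not an item). *)
Definition F (R : realType) (K : nat) (f : pref R K) (m i : nat) : R :=
  oapp (f (prefix_set K m)) 0 (insub i.-1 : option 'I_K).

(* Delta^i_{K-r+1} = f(K-r+1 | [K-i+1]) - f(K-r+2 | [K-i+1]) *)
Definition Delta (R : realType) (K : nat) (f : pref R K) (i r : nat) : R :=
  F f (K - i + 1) (K - r + 1) - F f (K - i + 1) (K - r + 2).

Definition Dstep (R : realType) (K : nat) (f : pref R K) (r : nat)
    (g : nat -> R) : R :=
  if r == 1%N then 1 / (1 - K%:R * F f K K)
  else ((K - r + 1)%:R * \sum_(1 <= i < r) Delta f i r * g i)
       / (1 - (K - r + 1)%:R * F f (K - r + 1) (K - r + 1)).

Fixpoint Dtab (R : realType) (K : nat) (f : pref R K) (n : nat) : nat -> R :=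
  match n with
  | 0 => fun _ => 0
  | n'.+1 => let g := Dtab f n' in fun r => if (r <= n')%N then g r else Dstep f r g
  end.

Definition D (R : realType) (K : nat) (f : pref R K) (r : nat) : R := Dtab f r r.

Definition IN (R : realType) (K : nat) (p : R) (f : pref R K) : R :=
  ln (1 / p) / (\sum_(1 <= r < K) D f r).

Definition local_rank (K : nat) (sigma : {perm 'I_K}) (S : {set 'I_K}) (i : 'I_K) : nat :=
  (1 + #|[set j in S | (sigma j < sigma i)%N]|)%N.

Definition fOA (R : realType) (K : nat) (p : R) (sigma : {perm 'I_K}) : pref R K :=
  fun S i => if i \in S then (1 - p) / (1 - p ^+ #|S|) * p ^+ (local_rank sigma S i).-1
             else 0.

Definition CKp (R : realType) (K : nat) (p : R) : R :=
  \sum_(1 <= r < K - 1)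
     ((1 - p) * p ^+ (K - r)
      / ((K - r)%:R * p ^+ (K - r + 1) - (K - r + 1)%:R * p ^+ (K - r) + 1))
  + (1 + p) / (1 - p).

Arguments fOA {R} K p sigma _ _.

(* Write D(f, r) = Dcoef_r * sum_(i < r) Delta^i_r D(f, i).  Transposing this
   triangular system gives sum_r D(f, r) = D(f, 1) V_1 with
   V_i = 1 + sum_(r > i) Delta^i_r Dcoef_r V_r.  The step for V_r involves f
   only through its restriction phi to the prefix [n], n = K - r + 1, which is
   a probability vector with phi_(k+1) <= p phi_k, and backward induction gives
   Dcoef_r V_r <= X_n := n C(n, p).  After summation by parts the inductive
   step reads sum_k (X_k - X_(k-1)) phi_k <= C(n, p) - 1: Abel summation
   against the nonincreasing weights phi_k / p^(k-1), because
   sum_(k <= j) (C(n, p) - 1 - X_k + X_(k-1)) p^(k-1)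
     = (C(n, p) - C(j, p)) (1 + p + ... + p^(j-1)) >= 0.
   For the OA preference phi_k is proportional to p^(k-1) and every step is
   an equality. *)

From HB Require Import structures.
From mathcomp Require Import all_boot all_order fingroup perm.
From mathcomp Require Import all_algebra.
From mathcomp Require Import reals exp.
From mathcomp Require Import ring lra zify.
Set Implicit Arguments. Unset Strict Implicit. Unset Printing Implicit Defensive.
Import Order.TTheory GRing.Theory Num.Theory.
Local Open Scope ring_scope.

Lemma abel_sum_ge (R : realDomainType) (a b : nat -> R) (n : nat) :
  (forall k, (1 <= k < n)%N -> a k.+1 <= a k) -> 0 <= a n ->
  (forall j, (1 <= j <= n)%N -> 0 <= \sum_(1 <= k < j.+1) b k) ->
  a n * \sum_(1 <= k < n.+1) b k <= \sum_(1 <= k < n.+1) a k * b k.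
Proof.
elim: n => [|n IH] a_decr an_ge0 partial_ge0; first by rewrite !big_geq ?mulr0.
case: n IH a_decr an_ge0 partial_ge0 => [_|n IH] a_decr an_ge0 partial_ge0.
  by rewrite !big_nat1.
rewrite (big_nat_recr n.+2) // [in X in _ <= X](big_nat_recr n.+2) //= mulrDr.
apply: lerD => //; apply: le_trans (IH _ _ _).
- apply: ler_wpM2r; first by apply: partial_ge0; lia.
  by apply: a_decr; lia.
- by move=> k hk; apply: a_decr; lia.
- by apply: le_trans an_ge0 _; apply: a_decr; lia.
- by move=> j hj; apply: partial_ge0; lia.
Qed.

Lemma big_nat_triangle (V : nmodType) (G : nat -> nat -> V) (a b : nat) :
  \sum_(a <= r < b) \sum_(r.+1 <= s < b) G r s = \sum_(a <= s < b) \sum_(a <= r < s) G r s.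
Proof.
elim: b => [|b IH]; first by rewrite !big_geq.
have [a_le_b|b_lt_a] := leqP a b; last by rewrite !big_geq.
rewrite big_nat_recr //= [in RHS]big_nat_recr //= -IH [X in _ + X = _]big_geq // addr0.
by rewrite -big_split /=; apply: eq_big_nat => r hr; rewrite big_nat_recr //; lia.
Qed.

Lemma ltn_ind_down (K : nat) (P : nat -> Prop) :
  (forall r, (r < K)%N -> (forall s, (r < s < K)%N -> P s) -> P r) ->
  forall r, (r < K)%N -> P r.
Proof.
move=> IH r; move: {2}(K - r)%N (leqnn (K - r)) => t.
elim: t r => [|t IHt] r ht r_lt; first lia.
by apply: IH => // s hs; apply: IHt; lia.
Qed.

Lemma big_nat_rev_shift (V : nmodType) (G : nat -> V) (K r : nat) : (1 <= r < K)%N ->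
  \sum_(r.+1 <= s < K) G (K - s + 1)%N = \sum_(2 <= k < K - r + 1) G k.
Proof.
move=> hr; rewrite big_nat_rev /=.
rewrite (eq_big_nat _ _ (F2 := fun s => G (s - r + 1)%N)); last by move=> s hs; congr G; lia.
have -> : r.+1 = (2 + (r - 1))%N by lia.
rewrite big_addn; have -> : (K - (r - 1) = K - r + 1)%N by lia.
by apply: eq_big_nat => i hi; congr G; lia.
Qed.

Section GeometricSums.
Variables (R : realFieldType) (p : R).

Definition geom_sum (j : nat) : R := \sum_(1 <= k < j.+1) p ^+ k.-1.

Definition dgeom_sum (j : nat) : R := \sum_(1 <= k < j) k%:R * p ^+ k.-1.

Lemma geom_sumE j : (1 - p) * geom_sum j = 1 - p ^+ j.
Proof.
elim: j => [|j IH]; first by rewrite /geom_sum big_geq // mulr0 expr0 subrr.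
by rewrite /geom_sum big_nat_recr //= mulrDr -/(geom_sum j) IH exprS; ring.
Qed.

Lemma dgeom_sumE m :
  m%:R * p ^+ (m + 1) - (m + 1)%:R * p ^+ m + 1 = (1 - p) ^+ 2 * dgeom_sum m.+1.
Proof.
elim: m => [|m IH]; first by rewrite /dgeom_sum big_geq //=; ring.
rewrite /dgeom_sum big_nat_recr //= mulrDr -/(dgeom_sum m.+1) -IH.
rewrite !addn1 !exprS -!natr1; ring.
Qed.

Lemma dgeom_sum_gt0 m : 0 <= p -> (0 < m)%N -> 0 < dgeom_sum m.+1.
Proof.
move=> p_ge0 m_gt0; rewrite /dgeom_sum big_ltn // expr0 mulr1 ltr_pwDl //.
by apply: sumr_ge0 => k _; apply: mulr_ge0 => //; apply: exprn_ge0.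
Qed.

End GeometricSums.

Section HardnessBound.
Variables (R : realFieldType) (p : R).
Hypothesis p01 : 0 < p < 1.

Let p_gt0 : 0 < p. Proof. by case/andP: p01. Qed.
Let p_lt1 : p < 1. Proof. by case/andP: p01. Qed.
Let subp_neq0 : 1 - p != 0. Proof. by rewrite subr_eq0 eq_sym lt_eqF. Qed.

Definition Cterm (m : nat) : R :=
  (1 - p) * p ^+ m / (m%:R * p ^+ (m + 1) - (m + 1)%:R * p ^+ m + 1).

(* [Cseq n] is C(n, p); the junk value [1] for [n <= 1] makes [Cseq]
   nondecreasing from [0] and [dX 1 = 0]. *)
Definition Cseq (n : nat) : R :=
  if (n <= 1)%N then 1 else \sum_(2 <= m < n) Cterm m + (1 + p) / (1 - p).

Definition Xseq (n : nat) : R := if (n <= 1)%N then 0 else n%:R * Cseq n.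

Definition dX (k : nat) : R := Xseq k - Xseq k.-1.

Lemma CtermE m : Cterm m = p ^+ m / ((1 - p) * dgeom_sum p m.+1).
Proof.
rewrite /Cterm dgeom_sumE.
have [->|dg0] := eqVneq (dgeom_sum p m.+1) 0; first by rewrite !mulr0 !invr0 !mulr0.
by field; rewrite dg0 subp_neq0.
Qed.

Lemma Cterm_ge0 m : (0 < m)%N -> 0 <= Cterm m.
Proof.
move=> m_gt0; rewrite CtermE; apply: divr_ge0; first exact/exprn_ge0/ltW.
have dg := dgeom_sum_gt0 (ltW p_gt0) m_gt0.
by apply: mulr_ge0; [rewrite subr_ge0 ltW | exact: ltW].
Qed.

Lemma Cseq2 : Cseq 2 = (1 + p) / (1 - p).
Proof. by rewrite /Cseq /= big_geq // add0r. Qed.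

Lemma CseqS n : (2 <= n)%N -> Cseq n.+1 = Cseq n + Cterm n.
Proof.
by case: n => [|[|n]] // _; rewrite /Cseq /= big_nat_recr //=; ring.
Qed.

Lemma Cseq_nondecreasing : {homo Cseq : m n / (m <= n)%N >-> m <= n}.
Proof.
apply: homo_leq => [//|x y z|n]; first exact: le_trans.
case: n => [|[|n]]; first by [].
  by rewrite Cseq2 /Cseq /= ler_pdivlMr ?subr_gt0 // mul1r; have := p_gt0; lra.
by rewrite (CseqS (n := n.+2)) // lerDl Cterm_ge0.
Qed.

Lemma Cseq_ge1 n : 1 <= Cseq n.
Proof. exact: (Cseq_nondecreasing (leq0n n)). Qed.

Lemma Xseq_gt1 n : (1 < n)%N -> Xseq n = n%:R * Cseq n.
Proof. by rewrite /Xseq ltnNge => /negbTE ->. Qed.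

Lemma Xseq_ge0 n : 0 <= Xseq n.
Proof.
rewrite /Xseq; case: ifP => // _.
by apply: mulr_ge0 (le_trans ler01 (Cseq_ge1 n)).
Qed.

Lemma sum_dX_geom j :
  \sum_(1 <= k < j.+1) dX k * p ^+ k.-1 = (Cseq j - 1) * geom_sum p j.
Proof.
have geomE i : geom_sum p i = (1 - p ^+ i) / (1 - p).
  by rewrite -geom_sumE; field.
elim: j => [|[|[|j]] IH]; first by rewrite big_geq // /Cseq subrr mul0r.
- by rewrite big_nat1 /dX /Xseq /Cseq /= !subrr !mul0r.
- rewrite big_nat_recr //= IH /dX /Xseq /= {1}/Cseq /= subrr mul0r add0r Cseq2.
  by rewrite !geomE; field.
rewrite big_nat_recr //= IH /dX /Xseq /= (CseqS (n := j.+2)) // !geomE /Cterm.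
have : (1 - p) ^+ 2 * dgeom_sum p j.+3 != 0.
  by rewrite mulf_neq0 ?expf_neq0 // gt_eqF // dgeom_sum_gt0 // ltW.
rewrite -dgeom_sumE !addn1 !exprS -!natr1 => denom_neq0.
by field; rewrite subp_neq0 denom_neq0.
Qed.

Lemma sum_dX_by_parts (phi : nat -> R) j : (1 <= j)%N ->
  \sum_(2 <= k < j) (phi k - phi k.+1) * Xseq k + phi j * Xseq j
    = \sum_(1 <= k < j.+1) dX k * phi k.
Proof.
elim: j => [|[|[|j]] IH] //= _.
- by rewrite big_geq // big_nat1 /dX /Xseq /= subrr !mul0r mulr0 add0r.
- by rewrite big_geq // big_nat_recr //= big_nat1 /dX /Xseq /=; ring.
by rewrite big_nat_recr //= [in RHS]big_nat_recr //= -IH // /dX; ring.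
Qed.

Lemma Cseq_dgeom K : (2 <= K)%N ->
  (1 - p) * Cseq K = 1 + \sum_(2 <= j < K.+1) p ^+ j.-1 / dgeom_sum p j.
Proof.
elim: K => [|[|[|K]] IH] //= _.
  by rewrite Cseq2 big_nat1 /dgeom_sum big_nat1 /= mul1r expr1 divr1; field.
rewrite (CseqS (n := K.+2)) // mulrDr IH // [in RHS]big_nat_recr //= addrA.
have dg := dgeom_sum_gt0 (ltW p_gt0) (isT : (0 < K.+2)%N).
by rewrite CtermE; field; rewrite subp_neq0 gt_eqF.
Qed.

Definition separable_seq (n : nat) (phi : nat -> R) : Prop :=
  [/\ forall k, (1 <= k <= n)%N -> 0 <= phi k,
      forall k, (1 <= k < n)%N -> phi k.+1 <= p * phi k
    & \sum_(1 <= k < n.+1) phi k = 1].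

Lemma sum_dX_le n phi : separable_seq n phi ->
  \sum_(1 <= k < n.+1) dX k * phi k <= Cseq n - 1.
Proof.
case=> phi_ge0 phi_decr phi_sum.
have n_gt0 : (0 < n)%N.
  by case: n phi_sum {phi_ge0 phi_decr} => // /eqP; rewrite big_geq // eq_sym oner_eq0.
pose b k := (Cseq n - 1 - dX k) * p ^+ k.-1.
have partialE j : \sum_(1 <= k < j.+1) b k = (Cseq n - Cseq j) * geom_sum p j.
  rewrite /b (eq_bigr (fun k => (Cseq n - 1) * p ^+ k.-1 - dX k * p ^+ k.-1)).
    by rewrite sumrB -mulr_sumr -/(geom_sum p j) sum_dX_geom; ring.
  by move=> k _; rewrite mulrBl.
have := @abel_sum_ge _ (fun k => phi k / p ^+ k.-1) b n.
rewrite partialE subrr mul0r mulr0.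
rewrite (eq_big_nat _ _ (F2 := fun k => (Cseq n - 1) * phi k - dX k * phi k)); last first.
  by move=> k _; rewrite /b mulrBl; field; rewrite expf_neq0 // gt_eqF.
rewrite sumrB -mulr_sumr phi_sum mulr1 subr_ge0; apply.
- move=> [|k] // hk; rewrite /= exprS invfM mulrA ler_pM2r ?invr_gt0 ?exprn_gt0 //.
  by rewrite ler_pdivrMr // mulrC phi_decr.
- by apply/divr_ge0/exprn_ge0/ltW => //; apply: phi_ge0; rewrite n_gt0 leqnn.
move=> j hj; rewrite partialE; apply: mulr_ge0.
  by rewrite subr_ge0 Cseq_nondecreasing //; case/andP: hj.
by apply: sumr_ge0 => k _; exact/exprn_ge0/ltW.
Qed.

Lemma separable_seq_bound n phi : (2 <= n)%N -> separable_seq n phi ->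
  1 + \sum_(2 <= k < n) (phi k - phi k.+1) * Xseq k <= Cseq n * (1 - n%:R * phi n).
Proof.
move=> n_ge2 phi_sep; have := sum_dX_le phi_sep.
rewrite -sum_dX_by_parts ?(ltnW n_ge2) // Xseq_gt1 //; lra.
Qed.

Lemma geom_seq_bound n c : (2 <= n)%N ->
  \sum_(1 <= k < n.+1) c * p ^+ k.-1 = 1 ->
  1 + \sum_(2 <= k < n) (c * p ^+ k.-1 - c * p ^+ k) * Xseq k
    = Cseq n * (1 - n%:R * (c * p ^+ n.-1)).
Proof.
move=> n_ge2 sum1.
have : \sum_(1 <= k < n.+1) dX k * (c * p ^+ k.-1) = Cseq n - 1.
  under eq_bigr do rewrite mulrCA.
  rewrite -mulr_sumr sum_dX_geom mulrCA.
  by move: sum1; rewrite -mulr_sumr -/(geom_sum p n) => ->; rewrite mulr1.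
rewrite -(sum_dX_by_parts (fun k => c * p ^+ k.-1)) ?(ltnW n_ge2) // Xseq_gt1 //.
lra.
Qed.

Lemma separable_seq_diff_ge0 n phi k : separable_seq n phi -> (1 <= k < n)%N ->
  0 <= phi k - phi k.+1.
Proof.
case=> phi_ge0 phi_decr _ hk; rewrite subr_ge0; apply: le_trans (phi_decr k hk) _.
by rewrite ler_piMl ?phi_ge0 ?ltW //; lia.
Qed.

Lemma separable_seq_last_lt n phi : (2 <= n)%N -> separable_seq n phi ->
  n%:R * phi n < 1.
Proof.
move=> n_ge2 phi_sep; have := separable_seq_bound n_ge2 phi_sep.
have : 0 <= \sum_(2 <= k < n) (phi k - phi k.+1) * Xseq k.
  rewrite big_nat_cond; apply: sumr_ge0 => k /andP[hk _].
  by apply: mulr_ge0 (Xseq_ge0 k); apply: separable_seq_diff_ge0 phi_sep _; lia.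
have C_gt0 : 0 < Cseq n by apply: lt_le_trans (Cseq_ge1 n).
rewrite -subr_gt0 => sum_ge0 bound.
by rewrite -(pmulr_rgt0 _ C_gt0); apply: lt_le_trans bound; lra.
Qed.

End HardnessBound.

Lemma CKp_Cseq (R : realType) (K : nat) (p : R) : (2 <= K)%N -> CKp K p = Cseq p K.
Proof.
move=> K_ge2; rewrite /CKp /Cseq ifF; last lia.
congr (_ + _); rewrite (eq_big_nat _ _ (F2 := fun r => Cterm p (K - r))) //.
rewrite big_nat_rev /= [in RHS]big_add1 subn1.
by apply: eq_big_nat => r hr; congr Cterm; lia.
Qed.

Section Duality.
Variables (R : realType) (K : nat) (f : pref R K).

Definition Dcoef (r : nat) : R :=
  (K - r + 1)%:R / (1 - (K - r + 1)%:R * F f (K - r + 1) (K - r + 1)).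

Lemma Dtab_D n i : (1 <= i <= n)%N -> Dtab f n i = D f i.
Proof.
elim: n => [|n IH] hi; first lia.
rewrite /=; case: ifP => [i_le|i_gt]; first by apply: IH; lia.
have -> : i = n.+1 by lia.
by rewrite /D /= ltnn.
Qed.

Lemma D_rec r : (2 <= r)%N -> D f r = Dcoef r * \sum_(1 <= i < r) Delta f i r * D f i.
Proof.
case: r => [//|r] r_ge2; rewrite /D /= ltnn /Dstep /= ifF; last by case: r r_ge2.
rewrite /Dcoef mulrAC; congr (_ * _); apply: eq_big_nat => i hi.
by rewrite Dtab_D //; lia.
Qed.

(* The fuel [K - i] suffices: the recursion only calls indices [r > i]. *)
Fixpoint Vtab (n i : nat) : R :=
  if n is n'.+1 then 1 + \sum_(i.+1 <= r < K) Delta f i r * Dcoef r * Vtab n' r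
  else 1.

Definition V (i : nat) : R := Vtab (K - i) i.

Lemma Vtab_stable m n i : (K - i <= m)%N -> (K - i <= n)%N -> Vtab m i = Vtab n i.
Proof.
elim: m n i => [|m IH] [|n] i hm hn //=.
- by rewrite big_geq ?addr0 //; lia.
- by rewrite big_geq ?addr0 //; lia.
by congr (_ + _); apply: eq_big_nat => r hr; congr (_ * _); apply: IH; lia.
Qed.

Lemma V_rec i : (i < K)%N ->
  V i = 1 + \sum_(i.+1 <= r < K) Delta f i r * Dcoef r * V r.
Proof.
rewrite /V; case E: (K - i)%N => [|m] i_lt; first lia.
by congr (_ + _); apply: eq_big_nat => r hr; congr (_ * _); apply: Vtab_stable; lia.
Qed.

Lemma sum_DE : (2 <= K)%N -> \sum_(1 <= r < K) D f r = D f 1 * V 1.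
Proof.
move=> K_ge2.
have sum_DV : \sum_(1 <= r < K) D f r * V r = \sum_(1 <= r < K) D f r
    + \sum_(1 <= r < K) \sum_(r.+1 <= s < K) D f r * (Delta f r s * Dcoef s * V s).
  rewrite -big_split /=; apply: eq_big_nat => r hr.
  by rewrite V_rec; [rewrite mulrDr mulr1 mulr_sumr | lia].
have tail : \sum_(1 <= r < K) \sum_(r.+1 <= s < K) D f r * (Delta f r s * Dcoef s * V s)
    = \sum_(2 <= s < K) D f s * V s.
  rewrite big_nat_triangle big_ltn // [X in X + _]big_geq // add0r.
  apply: eq_big_nat => s hs; rewrite D_rec; last lia.
  by rewrite mulr_sumr mulr_suml; apply: eq_big_nat => r hr; ring.
move: sum_DV; rewrite tail big_ltn //; lra.
Qed.

Lemma V_rec_prefix r : (1 <= r < K)%N ->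
  V r = 1 + \sum_(2 <= k < K - r + 1)
              (F f (K - r + 1) k - F f (K - r + 1) k.+1) * (Dcoef (K - k + 1) * V (K - k + 1)).
Proof.
move=> hr; rewrite V_rec; last lia; congr (_ + _).
rewrite -(big_nat_rev_shift (fun k => (F f (K - r + 1) k - F f (K - r + 1) k.+1)
                                        * (Dcoef (K - k + 1) * V (K - k + 1)))) //.
apply: eq_big_nat => s hs; have -> : (K - (K - s + 1) + 1 = s)%N by lia.
by rewrite -mulrA /Delta; have -> : (K - s + 2 = (K - s + 1).+1)%N by lia.
Qed.

End Duality.

Section PrefixSets.
Variables (R : realType) (K : nat) (f : pref R K).

Lemma F_ord m (i : 'I_K) : F f m i.+1 = f (prefix_set K m) i.
Proof. by rewrite /F /= valK. Qed.

Lemma card_prefix_set m : (m <= K)%N -> #|prefix_set K m| = m.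
Proof.
move=> m_le; rewrite -sum1_card.
rewrite (eq_bigl (fun i : 'I_K => (i < m)%N)); last by move=> i; rewrite inE.
by rewrite -(big_ord_widen _ (fun _ => 1%N) m_le) sum1_card card_ord.
Qed.

Lemma sum_prefix_set m : (m <= K)%N ->
  \sum_(i in prefix_set K m) f (prefix_set K m) i = \sum_(1 <= k < m.+1) F f m k.
Proof.
move=> m_le; rewrite (eq_bigl (fun i : 'I_K => (i < m)%N)); last by move=> i; rewrite inE.
rewrite (eq_bigr (fun i : 'I_K => F f m i.+1)); last by move=> i _; rewrite F_ord.
by rewrite -(big_ord_widen _ (fun k => F f m k.+1) m_le) big_add1 /= big_mkord.
Qed.

Lemma F_separable p m : in_Mp_id p f -> (2 <= m <= K)%N -> separable_seq p m (F f m).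
Proof.
case=> f_pos f_sum f_sep m_range.
have card_m : (2 <= #|prefix_set K m|)%N by rewrite card_prefix_set; lia.
split.
- case=> [//|k] hk; have k_lt : (k < K)%N by lia.
  rewrite -[k.+1]/(Ordinal k_lt).+1 F_ord; apply/ltW/(f_pos _ card_m).
  by rewrite inE /=; lia.
- case=> [//|k] hk; have k1_lt : (k.+1 < K)%N by lia.
  have k_lt : (k < K)%N by lia.
  rewrite -[k.+1]/(Ordinal k_lt).+1 -[k.+2]/(Ordinal k1_lt).+1 !F_ord.
  by apply: f_sep; rewrite ?inE ?perm1 //=; lia.
by rewrite -sum_prefix_set ?f_sum //; lia.
Qed.

End PrefixSets.

Section SeparableBound.
Variables (R : realType) (K : nat) (p : R) (f : pref R K).
Hypotheses (p01 : 0 < p < 1) (f_sep : in_Mp_id p f).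

Lemma Dcoef_gt0 r : (1 <= r < K)%N -> 0 < Dcoef f r.
Proof.
move=> hr; have n_range : (2 <= K - r + 1 <= K)%N by lia.
have /andP[n_ge2 _] := n_range.
have last_lt := separable_seq_last_lt p01 n_ge2 (F_separable f_sep n_range).
by apply: divr_gt0; rewrite ?subr_gt0 // ltr0n addn1.
Qed.

Lemma DcoefV_bound r : (r < K)%N -> (1 <= r)%N ->
  1 <= V f r /\ Dcoef f r * V f r <= Xseq p (K - r + 1).
Proof.
move: r; apply: ltn_ind_down => r r_lt IH r_ge1.
set n := (K - r + 1)%N.
have n_range : (2 <= n <= K)%N by rewrite /n; lia.
have n_ge2 : (2 <= n)%N by case/andP: n_range.
have phi_sep := F_separable f_sep n_range.
have term_bound k : (2 <= k < n)%N ->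
    0 <= (F f n k - F f n k.+1) * (Dcoef f (K - k + 1) * V f (K - k + 1))
    <= (F f n k - F f n k.+1) * Xseq p k.
  move=> hk; have /andP[k_ge2 k_lt] : (2 <= k < K - r + 1)%N by [].
  have [V_ge1 DV_le] := IH (K - k + 1)%N ltac:(lia) ltac:(lia).
  rewrite (_ : K - (K - k + 1) + 1 = k)%N in DV_le; last lia.
  have k_range : (1 <= k < n)%N by case/andP: hk => /ltnW -> ->.
  have diff_ge0 := separable_seq_diff_ge0 p01 phi_sep k_range.
  rewrite mulr_ge0 ?ler_wpM2l //.
  by apply/mulr_ge0/(le_trans ler01 V_ge1)/ltW/Dcoef_gt0; lia.
have hr : (1 <= r < K)%N by rewrite r_ge1.
have V_eq := V_rec_prefix f hr; rewrite -/n in V_eq.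
split.
  rewrite V_eq lerDl big_nat_cond; apply: sumr_ge0 => k /andP[hk _].
  by case/andP: (term_bound k hk).
have V_le : V f r <= Cseq p n * (1 - n%:R * F f n n).
  apply: le_trans (separable_seq_bound p01 n_ge2 phi_sep).
  rewrite V_eq lerD2l; apply: ler_sum_nat => k hk.
  by case/andP: (term_bound k hk).
have Dcoef_pos := Dcoef_gt0 hr.
apply: le_trans (ler_wpM2l (ltW Dcoef_pos) V_le) _.
have last_lt := separable_seq_last_lt p01 n_ge2 phi_sep.
suff -> : Dcoef f r * (Cseq p n * (1 - n%:R * F f n n)) = Xseq p n by [].
by rewrite /Dcoef -/n Xseq_gt1 //; field; rewrite subr_eq0 eq_sym lt_eqF.
Qed.

Lemma sum_D_DcoefV : (2 <= K)%N -> \sum_(1 <= r < K) D f r = Dcoef f 1 * V f 1 / K%:R.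
Proof.
move=> K_ge2; rewrite sum_DE // /Dcoef subnK; last lia.
have K_range : (2 <= K <= K)%N by rewrite K_ge2 leqnn.
have last_lt := separable_seq_last_lt p01 K_ge2 (F_separable f_sep K_range).
have -> : D f 1 = 1 / (1 - K%:R * F f K K) by [].
by field; rewrite pnatr_eq0 -lt0n (ltnW K_ge2) subr_eq0 eq_sym lt_eqF.
Qed.

Lemma sum_D_bounds : (2 <= K)%N -> 0 < \sum_(1 <= r < K) D f r <= CKp K p.
Proof.
move=> K_ge2; rewrite sum_D_DcoefV // CKp_Cseq //.
have [V_ge1 DV_le] := DcoefV_bound K_ge2 (leqnn 1).
have Dcoef_pos : 0 < Dcoef f 1 by apply: Dcoef_gt0; rewrite K_ge2.
have XK : Xseq p (K - 1 + 1) = K%:R * Cseq p K by rewrite subnK ?Xseq_gt1 // ltnW.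
have K_gt0 : 0 < K%:R :> R by rewrite ltr0n ltnW.
apply/andP; split.
  by rewrite divr_gt0 // mulr_gt0 // (lt_le_trans ltr01 V_ge1).
by rewrite ler_pdivrMr // [X in _ <= X]mulrC -XK.
Qed.

End SeparableBound.

Section OrdinalAttraction.
Variables (R : realType) (K : nat) (p : R).
Hypothesis p01 : 0 < p < 1.

Definition rank_in (S : {set 'I_K}) (i : 'I_K) : nat := #|[set j in S | (j < i)%N]|.

Lemma local_rank_id S i : local_rank 1%g S i = (rank_in S i).+1.
Proof.
by rewrite /local_rank /rank_in add1n; congr _.+1; apply: eq_card => j; rewrite !inE !perm1.
Qed.

Lemma sum_exp_rank_in (S : {set 'I_K}) : \sum_(i in S) p ^+ rank_in S i = geom_sum p #|S|.
Proof.
move card_S: #|S| => n; elim: n S card_S => [|n IH] S card_S.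
  by rewrite (cards0_eq card_S) big_set0 /geom_sum big_geq.
have [m mS m_max] : exists2 m : 'I_K, m \in S & forall j, j \in S -> (j <= m)%N.
  have [i0 i0S] : exists i0, i0 \in S by apply/card_gt0P; rewrite card_S.
  by case: (arg_maxnP val i0S) => m mS m_max; exists m.
have card_Sm : #|S :\ m| = n by move: card_S; rewrite (cardsD1 m) mS add1n => -[].
have rank_m : rank_in S m = n.
  rewrite /rank_in -card_Sm; apply: eq_card => j; rewrite !inE.
  case jS: (j \in S); rewrite ?andbF //=.
  by rewrite ltn_neqAle m_max // andbT andbC.
have rank_Sm i : i \in S :\ m -> rank_in S i = rank_in (S :\ m) i.
  rewrite !inE => /andP[im iS]; rewrite /rank_in.
  suff -> : [set j in S | (j < i)%N] = [set j in S :\ m | (j < i)%N] by [].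
  apply/setP => j; rewrite !inE.
  by case: (eqVneq j m) => [->|] //=; rewrite ltnNge m_max ?andbF.
rewrite (bigD1 m) //= rank_m (eq_bigl (mem (S :\ m))); last by move=> i; rewrite !inE andbC.
rewrite (eq_bigr (fun i => p ^+ rank_in (S :\ m) i)) => [|i /rank_Sm -> //].
rewrite IH //.
by rewrite /geom_sum [in RHS]big_nat_recr //= addrC.
Qed.

Let fOA_norm_gt0 (S : {set 'I_K}) : (2 <= #|S|)%N -> 0 < (1 - p) / (1 - p ^+ #|S|).
Proof.
case/andP: p01 => p_gt0 p_lt1 card_S.
by rewrite divr_gt0 // subr_gt0 // exprn_ilt1 ?ltW //; case: #|S| card_S.
Qed.

Lemma fOA_in_Mp_id : in_Mp_id p (fOA K p 1%g).
Proof.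
case/andP: p01 => p_gt0 p_lt1.
split=> S card_S.
- move=> i; rewrite /fOA; case: (boolP (i \in S)) => iS; split=> //; last by rewrite ltxx.
  by move=> _; rewrite mulr_gt0 ?exprn_gt0 ?fOA_norm_gt0.
- rewrite /fOA (eq_bigr (fun i => (1 - p) / (1 - p ^+ #|S|) * p ^+ rank_in S i)).
    rewrite -mulr_sumr sum_exp_rank_in -(geom_sumE p #|S|).
    have : 0 < (1 - p) * geom_sum p #|S|.
      by rewrite geom_sumE subr_gt0 exprn_ilt1 ?ltW //; case: #|S| card_S.
    rewrite pmulr_rgt0 ?subr_gt0 // => geom_gt0.
    by field; rewrite !gt_eqF ?subr_gt0.
  by move=> i iS; rewrite iS local_rank_id.
move=> i i' iS i'S; rewrite !perm1 => i'_lt_i.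
rewrite /fOA iS i'S !local_rank_id /= mulrCA.
apply: ler_wpM2l; first exact/ltW/fOA_norm_gt0.
rewrite -exprS ler_wiXn2l ?ltW //; apply/proper_card/properP; split.
  by apply/subsetP => j; rewrite !inE => /andP[-> /ltn_trans ->].
by exists i'; rewrite !inE ?i'S ?ltnn //= andbF.
Qed.

Lemma F_fOA m k : (2 <= m <= K)%N -> (1 <= k <= m)%N ->
  F (fOA K p 1%g) m k = (1 - p) / (1 - p ^+ m) * p ^+ k.-1.
Proof.
case: k => [//|k] m_range k_range; have k_lt : (k < K)%N by lia.
rewrite -[k.+1]/(Ordinal k_lt).+1 F_ord /fOA local_rank_id inE ifT /=; last lia.
rewrite card_prefix_set; last lia.
congr (_ * _ ^+ _); rewrite -[RHS](@card_prefix_set K k); last lia.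
by apply: eq_card => j; rewrite !inE /=; case: (ltnP j k) => ?; rewrite ?andbT ?andbF //; lia.
Qed.

Lemma DcoefV_fOA r : (r < K)%N -> (1 <= r)%N ->
  Dcoef (fOA K p 1%g) r * V (fOA K p 1%g) r = Xseq p (K - r + 1).
Proof.
set f := fOA K p 1%g; move: r; apply: ltn_ind_down => r r_lt IH r_ge1.
set n := (K - r + 1)%N; set c := (1 - p) / (1 - p ^+ n).
have hr : (1 <= r < K)%N by rewrite r_ge1.
have n_range : (2 <= n <= K)%N by rewrite /n; lia.
have n_ge2 : (2 <= n)%N by case/andP: n_range.
have Fn k : (1 <= k <= n)%N -> F f n k = c * p ^+ k.-1 by apply: F_fOA.
have sum1 : \sum_(1 <= k < n.+1) c * p ^+ k.-1 = 1.
  case: (F_separable fOA_in_Mp_id n_range) => _ _ <-.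
  by apply: eq_big_nat => k hk; rewrite Fn.
have V_eq : V f r = 1 + \sum_(2 <= k < n) (c * p ^+ k.-1 - c * p ^+ k) * Xseq p k.
  rewrite V_rec_prefix // -/n; congr (_ + _); apply: eq_big_nat => k hk.
  have /andP[k_ge2 k_lt] : (2 <= k < K - r + 1)%N by [].
  rewrite IH; [|lia|lia]; have -> : (K - (K - k + 1) + 1 = k)%N by lia.
  by rewrite !Fn //; lia.
have last_lt := separable_seq_last_lt p01 n_ge2 (F_separable fOA_in_Mp_id n_range).
rewrite V_eq geom_seq_bound // /Dcoef -/n Xseq_gt1 // -Fn ?leqnn ?(ltnW n_ge2) //.
by field; rewrite subr_eq0 eq_sym lt_eqF.
Qed.

Lemma sum_D_fOA : (2 <= K)%N -> \sum_(1 <= r < K) D (fOA K p 1%g) r = CKp K p.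
Proof.
move=> K_ge2; rewrite (sum_D_DcoefV p01 fOA_in_Mp_id) // DcoefV_fOA ?subnK ?(ltnW K_ge2) //.
by rewrite Xseq_gt1 // CKp_Cseq //; field; rewrite pnatr_eq0 -lt0n ltnW.
Qed.

End OrdinalAttraction.




Theorem mainTheorem5 (R : realType) (K : nat) (p : R) :
  (2 <= K)%N -> 0 < p < 1 ->
  [/\ (forall f : pref R K, in_Mp_id p f -> \sum_(1 <= r < K) D f r <= CKp K p),
      \sum_(1 <= r < K) D (fOA K p 1%g) r = CKp K p,
      in_Mp_id p (fOA K p 1%g) /\
        (forall f : pref R K, in_Mp_id p f -> IN p (fOA K p 1%g) <= IN p f),
      IN p (fOA K p 1%g) = ln (1 / p) / CKp K p &
      ln (1 / p) / CKp K p
        = (1 - p) * ln (1 / p)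
          * (1 + \sum_(2 <= j < K.+1)
                   p ^+ j.-1 / (\sum_(1 <= k < j) k%:R * p ^+ k.-1))^-1].
Proof.
move=> K_ge2 p01; have [p_gt0 p_lt1] := andP p01.
have fOA_sep := fOA_in_Mp_id K p01.
have sum_fOA := sum_D_fOA p01 K_ge2.
have C_gt0 : 0 < CKp K p by rewrite -sum_fOA; case/andP: (sum_D_bounds p01 fOA_sep K_ge2).
have ln_gt0 : 0 < ln (1 / p) by rewrite ln_gt0 // div1r invf_gt1.
split=> //.
- by move=> f f_sep; case/andP: (sum_D_bounds p01 f_sep K_ge2).
- split=> // f f_sep; case/andP: (sum_D_bounds p01 f_sep K_ge2) => sum_gt0 sum_le.
  by rewrite /IN sum_fOA ler_wpM2l ?(ltW ln_gt0) // lef_pV2 ?posrE.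
- by rewrite /IN sum_fOA.
rewrite -/(dgeom_sum p _) -(Cseq_dgeom p01 K_ge2) -CKp_Cseq //.
by field; rewrite !gt_eqF // subr_gt0.
Qed.
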